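(* Let $n\in\mathbb N$ and let $y,z\in B_n$ with $\pi_z<\pi_y$ and $y\not\sim z$. Let $\psi_1^{(n)}$ be the nonnegative principal Dirichlet eigenvector in $B_n$ with $\|\psi_1^{(n)}\|_2=1$, and let $m_y=2\max_{x\sim y}\psi_1^{(n)}(x)$. Then $$\psi_1^{(n)}(y)\le\frac{m_y}{1-\pi_z/\pi_y}.$$
   Context: Lattice $\mathbb Z^d$, $d\ge2$, $x\sim y$ iff $|x-y|_1=1$, with positive conductances $w_{xy}=w_{yx}$ on nearest-neighbour edges. $B_n=[-n,n]^d\cap\mathbb Z^d$, $\pi_x=\sum_{y\sim x}w_{xy}$. $\mathcal E^{\boldsymbol w}(f)=\frac12\sum_x\sum_{y\sim x}w_{xy}(f(x)-f(y))^2$. The principal Dirichlet eigenvalue $\lambda_1^{(n)}=\inf\{\mathcal E^{\boldsymbol w}(f):\mathrm{supp}\,f\subseteq B_n,\|f\|_2=1\}$ is simple (Perron–Frobenius) and $\psi_1^{(n)}$ is the corresponding minimizer, supported in $B_n$, chosen nonnegative with $\|\psi_1^{(n)}\|_2=1$. *)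

From Stdlib Require Import Reals Lra Lia ZArith List.
Import ListNotations.
Open Scope R_scope.

(* A lattice point of Z^d is a list of d integer coordinates. *)
Definition point := list Z.

Definition sumR (l : list R) : R := fold_right Rplus 0 l.

(* Maximum of a nonempty list of reals (0 for the empty list, never used). *)
Definition listmax (l : list R) : R :=
  match l with [] => 0 | a :: t => fold_right Rmax a t end.

(* The 2d nearest neighbours x +- e_i (i.e. |x - y|_1 = 1) of x. *)
Fixpoint nbrs (x : point) : list point :=
  match x with
  | [] => []
  | c :: t => ((c + 1)%Z :: t) :: ((c - 1)%Z :: t) :: map (cons c) (nbrs t)
  end.

Definition adj (x y : point) : Prop := In y (nbrs x).

Definition pi (w : point -> point -> R) (x : point) : R :=
  sumR (map (w x) (nbrs x)).

Definition in_box (d n : nat) (x : point) : Prop :=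
  length x = d /\ Forall (fun c => (- Z.of_nat n <= c <= Z.of_nat n)%Z) x.

Definition coords (n : nat) : list Z :=
  map (fun k => (Z.of_nat k - Z.of_nat n)%Z) (seq 0 (2 * n + 1)).

Fixpoint box_list (d n : nat) : list point :=
  match d with
  | O => [[]]
  | S d' => flat_map (fun c => map (cons c) (box_list d' n)) (coords n)
  end.

Definition supported (d n : nat) (f : point -> R) : Prop :=
  forall x, length x = d -> ~ in_box d n x -> f x = 0.

(* ||f||_2^2 for f supported in B_n *)
Definition sqnorm (d n : nat) (f : point -> R) : R :=
  sumR (map (fun x => f x ^ 2) (box_list d n)).

(* E^w(f) = 1/2 sum_x sum_{y~x} w_xy (f x - f y)^2, for f supported in B_n:
   every nonzero term has x in B_(n+1), so the sum over x ranges over B_(n+1). *)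
Definition energy (d n : nat) (w : point -> point -> R) (f : point -> R) : R :=
  / 2 * sumR (map (fun x => sumR (map (fun y => w x y * (f x - f y) ^ 2) (nbrs x)))
                  (box_list d (S n))).

(* psi is the nonnegative, L2-normalised minimiser of the Rayleigh problem
   defining lambda_1^(n), i.e. the principal Dirichlet eigenvector psi_1^(n). *)
Definition principal_eigvec (d n : nat) (w : point -> point -> R) (psi : point -> R) : Prop :=
  supported d n psi /\
  (forall x, length x = d -> 0 <= psi x) /\
  sqnorm d n psi = 1 /\
  (forall f, supported d n f -> sqnorm d n f = 1 -> energy d n w psi <= energy d n w f).

From Stdlib Require Import Reals ZArith List Lra Lia Permutation.
Import ListNotations.
Open Scope R_scope.

(* Compare psi with the competitor f that moves the mass psi(y)^2 to z:
   f(y) = 0 and f(z) = sqrt(psi(y)^2 + psi(z)^2).  It has the same L2 norm, so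
   minimality gives E(psi) <= E(f).  Changing a function at one site p only
   affects the bonds at p.  With M = max_{x~y} psi(x), killing psi at y raises
   the energy by at most (2 psi(y) M - psi(y)^2) pi_y, and, since y and z are
   not adjacent and psi >= 0 around z, raising psi at z costs at most
   psi(y)^2 pi_z.  Hence psi(y) (pi_y - pi_z) <= 2 M pi_y. *)

Section ListSums.
Context {A : Type}.

Lemma sumR_add (l : list A) (g h : A -> R) :
  sumR (map (fun x => g x + h x) l) = sumR (map g l) + sumR (map h l).
Proof. induction l; simpl; [lra|]. rewrite IHl; lra. Qed.

Lemma sumR_sub (l : list A) (g h : A -> R) :
  sumR (map (fun x => g x - h x) l) = sumR (map g l) - sumR (map h l).
Proof. induction l; simpl; [lra|]. rewrite IHl; lra. Qed.

Lemma sumR_scale (l : list A) (k : R) (g : A -> R) :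
  sumR (map (fun x => k * g x) l) = k * sumR (map g l).
Proof. induction l; simpl; [lra|]. rewrite IHl; lra. Qed.

Lemma sumR_le (l : list A) (g h : A -> R) :
  (forall x, In x l -> g x <= h x) -> sumR (map g l) <= sumR (map h l).
Proof.
  induction l as [|a l IH]; simpl; intros H; [lra|].
  pose proof (H a (or_introl eq_refl)).
  pose proof (IH (fun x Hx => H x (or_intror Hx))). lra.
Qed.

Lemma sumR_eq0 (l : list A) (g : A -> R) :
  (forall x, In x l -> g x = 0) -> sumR (map g l) = 0.
Proof.
  induction l; simpl; intros H; [lra|].
  rewrite H, IHl by auto. lra.
Qed.

Lemma sumR_ge0 (l : list A) (g : A -> R) :
  (forall x, In x l -> 0 <= g x) -> 0 <= sumR (map g l).
Proof.
  intros H. rewrite <- (sumR_eq0 l (fun _ => 0)) by auto. now apply sumR_le.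
Qed.

Lemma sumR_single (l : list A) (g : A -> R) (p : A) : NoDup l -> In p l ->
  (forall x, In x l -> x <> p -> g x = 0) -> sumR (map g l) = g p.
Proof.
  induction l as [|a l IH]; simpl; intros Hnd Hp H; [contradiction|].
  inversion Hnd; subst. destruct Hp as [<-|Hp].
  - rewrite sumR_eq0; [lra|]. intros x Hx. apply H; auto. intros ->; contradiction.
  - rewrite H, IH; auto; [lra|]. intros ->; contradiction.
Qed.

Lemma sumR_filter (l : list A) (P : A -> bool) (g : A -> R) :
  sumR (map (fun x => if P x then g x else 0) l) = sumR (map g (filter P l)).
Proof. induction l; simpl; [lra|]. destruct (P a); simpl; rewrite IHl; lra. Qed.

Lemma sumR_perm (l l' : list R) : Permutation l l' -> sumR l = sumR l'.
Proof. induction 1; simpl; lra. Qed.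

End ListSums.

Lemma listmax_ge (l : list R) (v : R) : In v l -> v <= listmax l.
Proof.
  destruct l as [|a t]; simpl; [contradiction|].
  assert (a <= fold_right Rmax a t /\ forall x, In x t -> x <= fold_right Rmax a t)
    as [Ha Ht].
  { induction t as [|b t [IH1 IH2]]; simpl; [split; [lra|tauto]|].
    split; [eapply Rle_trans; [exact IH1|apply Rmax_r]|].
    intros x [<-|Hx]; [apply Rmax_l|].
    eapply Rle_trans; [apply IH2; auto|apply Rmax_r]. }
  intros [<-|Hv]; auto.
Qed.

Lemma NoDup_map_cons (c : Z) (l : list point) : NoDup l -> NoDup (map (cons c) l).
Proof. intros H. apply FinFun.Injective_map_NoDup; [|exact H]. now intros u v [= ->]. Qed.

Lemma nbrs_length (x u : point) : In u (nbrs x) -> length u = length x.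
Proof.
  revert u; induction x as [|c t IH]; simpl; intros u H; [contradiction|].
  destruct H as [<-|[<-|H]]; simpl; auto.
  apply in_map_iff in H as [v [<- Hv]]. simpl. now rewrite (IH v Hv).
Qed.

Lemma nbrs_sym (x u : point) : In u (nbrs x) -> In x (nbrs u).
Proof.
  revert u; induction x as [|c t IH]; simpl; intros u H; [contradiction|].
  destruct H as [<-|[<-|H]]; simpl.
  - right; left. f_equal. lia.
  - left. f_equal. lia.
  - apply in_map_iff in H as [v [<- Hv]]. simpl. right; right. apply in_map; auto.
Qed.

Lemma nbrs_irrefl (x : point) : ~ In x (nbrs x).
Proof.
  induction x as [|c t IH]; simpl; [auto|].
  intros [H|[H|H]]; try (injection H; lia).
  apply in_map_iff in H as [v [[= ->] Hv]]. auto.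
Qed.

Lemma nbrs_NoDup (x : point) : NoDup (nbrs x).
Proof.
  induction x as [|c t IH]; simpl; [constructor|].
  constructor; [|constructor; [|now apply NoDup_map_cons]].
  - intros [H|H]; [injection H; lia|].
    apply in_map_iff in H as [v [Hv _]]. injection Hv; lia.
  - intros H. apply in_map_iff in H as [v [Hv _]]. injection Hv; lia.
Qed.

Lemma nbrs_nonempty (x : point) : x <> [] -> exists u, In u (nbrs x).
Proof. destruct x as [|c t]; [congruence|]. intros _. eexists. now left. Qed.

Lemma in_box_S (d n : nat) (x : point) : in_box d n x -> in_box d (S n) x.
Proof.
  intros [Hl Hf]. split; auto. eapply Forall_impl; [|exact Hf]. simpl; lia.
Qed.

Lemma in_box_nbrs (d n : nat) (p u : point) :
  in_box d n p -> In u (nbrs p) -> in_box d (S n) u.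
Proof.
  revert d u; induction p as [|c t IH]; simpl; intros d u [Hl Hf] H; [contradiction|].
  inversion Hf as [|? ? Hc Ht]; subst. simpl.
  assert (Ht' : Forall (fun c => (- Z.of_nat (S n) <= c <= Z.of_nat (S n))%Z) t).
  { eapply Forall_impl; [|exact Ht]. simpl; lia. }
  destruct H as [<-|[<-|H]]; [split; auto; constructor; auto; lia ..|].
  apply in_map_iff in H as [v [<- Hv]].
  destruct (IH (length t) v (conj eq_refl Ht) Hv) as [Hl' Hf'].
  split; simpl; auto. constructor; auto. lia.
Qed.

Lemma in_box_list (d n : nat) (x : point) : in_box d n x -> In x (box_list d n).
Proof.
  revert x; induction d as [|d IH]; intros x [Hl Hf].
  - destruct x; simpl in *; [auto|discriminate].
  - destruct x as [|c t]; simpl in Hl; [discriminate|].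
    inversion Hf; subst. apply in_flat_map. exists c. split.
    + apply in_map_iff. exists (Z.to_nat (c + Z.of_nat n)).
      split; [rewrite Z2Nat.id; lia|apply in_seq; lia].
    + apply in_map, IH. split; auto.
Qed.

Lemma box_list_NoDup (d n : nat) : NoDup (box_list d n).
Proof.
  induction d as [|d IH]; simpl; [repeat constructor; auto|].
  assert (Hc : NoDup (coords n)).
  { apply FinFun.Injective_map_NoDup; [intros i j; lia|apply seq_NoDup]. }
  induction Hc as [|c cs Hc _ IHc]; simpl; [constructor|].
  apply NoDup_app; auto using NoDup_map_cons.
  intros a Ha Hb. apply in_map_iff in Ha as [v [<- _]].
  apply in_flat_map in Hb as [c' [Hc' Hv]].
  apply in_map_iff in Hv as [v' [[= ->] _]]. contradiction.
Qed.

Definition upd (f : point -> R) (p : point) (v : R) : point -> R :=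
  fun x => if list_eq_dec Z.eq_dec x p then v else f x.

Lemma upd_eq (f : point -> R) (p : point) (v : R) : upd f p v p = v.
Proof. unfold upd. now destruct list_eq_dec. Qed.

Lemma upd_neq (f : point -> R) (p x : point) (v : R) : x <> p -> upd f p v x = f x.
Proof. unfold upd. now destruct list_eq_dec. Qed.

Lemma supported_upd (d n : nat) (f : point -> R) (p : point) (v : R) :
  supported d n f -> in_box d n p -> supported d n (upd f p v).
Proof.
  intros Hf Hp x Hl Hx. rewrite upd_neq; auto. intros ->. contradiction.
Qed.

Lemma sumR_upd (L : list point) (g : R -> point -> R) (f : point -> R) (p : point) (v : R) :
  NoDup L -> In p L ->
  sumR (map (fun x => g (upd f p v x) x) L)
  = sumR (map (fun x => g (f x) x) L) + g v p - g (f p) p.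
Proof.
  intros Hnd Hp.
  enough (sumR (map (fun x => g (upd f p v x) x - g (f x) x) L) = g v p - g (f p) p)
    by (rewrite sumR_sub in *; lra).
  rewrite (sumR_single _ _ p Hnd Hp); [now rewrite upd_eq|].
  intros x _ Hx. rewrite upd_neq; auto; lra.
Qed.

Lemma sqnorm_upd (d n : nat) (f : point -> R) (p : point) (v : R) : in_box d n p ->
  sqnorm d n (upd f p v) = sqnorm d n f + v ^ 2 - f p ^ 2.
Proof.
  intros Hp. apply (sumR_upd _ (fun t _ => t ^ 2));
    auto using box_list_NoDup, in_box_list.
Qed.

Lemma sumR_sites_adjacent_to (L : list point) (p : point) (h : point -> R) :
  NoDup L -> (forall u, In u (nbrs p) -> In u L) ->
  sumR (map (fun x => if in_dec (list_eq_dec Z.eq_dec) p (nbrs x) then h x else 0) L)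
  = sumR (map h (nbrs p)).
Proof.
  intros Hnd Hsub.
  set (P := fun x => if in_dec (list_eq_dec Z.eq_dec) p (nbrs x) then true else false).
  transitivity (sumR (map (fun x => if P x then h x else 0) L)).
  { f_equal. apply map_ext. intros x. unfold P. now destruct in_dec. }
  rewrite sumR_filter. apply sumR_perm, Permutation_map, NoDup_Permutation;
    auto using NoDup_filter, nbrs_NoDup.
  intros x. rewrite filter_In. unfold P. destruct in_dec as [Hx|Hx].
  - split; [intros _; now apply nbrs_sym|intros Hxp; auto].
  - split; [intros [_ [=]]|intros Hxp; exfalso; now apply Hx, nbrs_sym].
Qed.

Section EnergyUpdate.
Variables (w : point -> point -> R) (f : point -> R) (p : point) (v : R).
Hypothesis wsym_p : forall u, In u (nbrs p) -> w p u = w u p.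

Let bond (g : point -> R) (x u : point) : R := w x u * (g x - g u) ^ 2.
Let dbond (x u : point) : R := bond (upd f p v) x u - bond f x u.

Lemma dbond_site (x : point) :
  sumR (map (dbond x) (nbrs x))
  = (if list_eq_dec Z.eq_dec x p then sumR (map (dbond p) (nbrs p)) else 0)
    + (if in_dec (list_eq_dec Z.eq_dec) p (nbrs x) then dbond x p else 0).
Proof.
  destruct list_eq_dec as [->|Hxp].
  - destruct in_dec as [Hin|_]; [exfalso; now apply (nbrs_irrefl p)|lra].
  - destruct in_dec as [Hin|Hin].
    + rewrite (sumR_single _ _ p (nbrs_NoDup x) Hin); [lra|].
      intros u _ Hu. unfold dbond, bond. rewrite !upd_neq; auto; lra.
    + rewrite sumR_eq0; [lra|]. intros u Hu. unfold dbond, bond.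
      rewrite !upd_neq; auto; [lra|]. intros ->. contradiction.
Qed.

(* Every bond at p is counted twice, once from each endpoint. *)
Lemma sumR_bonds_upd (L : list point) :
  NoDup L -> In p L -> (forall u, In u (nbrs p) -> In u L) ->
  sumR (map (fun x => sumR (map (bond (upd f p v) x) (nbrs x))) L)
  = sumR (map (fun x => sumR (map (bond f x) (nbrs x))) L)
    + 2 * sumR (map (fun u => w p u * ((v - f u) ^ 2 - (f p - f u) ^ 2)) (nbrs p)).
Proof.
  intros Hnd Hp Hsub.
  enough (sumR (map (fun x => sumR (map (dbond x) (nbrs x))) L)
          = 2 * sumR (map (fun u => w p u * ((v - f u) ^ 2 - (f p - f u) ^ 2)) (nbrs p)))
    as E.
  { enough (sumR (map (fun x => sumR (map (bond (upd f p v) x) (nbrs x))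
                                 - sumR (map (bond f x) (nbrs x))) L)
            = sumR (map (fun x => sumR (map (dbond x) (nbrs x))) L)) as H
      by (rewrite sumR_sub in H; lra).
    f_equal. apply map_ext. intros x. unfold dbond. now rewrite sumR_sub. }
  rewrite (map_ext _ _ dbond_site), sumR_add, sumR_sites_adjacent_to by auto.
  rewrite (sumR_single _ _ p Hnd Hp);
    [|intros x _ Hx; now destruct list_eq_dec].
  destruct list_eq_dec; [|congruence].
  assert (Hbond : forall u, In u (nbrs p) ->
            dbond u p = w p u * ((v - f u) ^ 2 - (f p - f u) ^ 2)
            /\ dbond p u = w p u * ((v - f u) ^ 2 - (f p - f u) ^ 2)).
  { intros u Hu. assert (Hup : u <> p) by (intros ->; now apply (nbrs_irrefl p)).
    unfold dbond, bond. rewrite upd_eq, upd_neq, wsym_p by auto. split; ring. }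
  erewrite (map_ext_in (fun u => dbond u p)), (map_ext_in (dbond p));
    try (intros u Hu; apply (Hbond u Hu)). lra.
Qed.

End EnergyUpdate.

Lemma energy_upd (d n : nat) (w : point -> point -> R) (f : point -> R)
    (p : point) (v : R) :
  in_box d n p -> (forall u, In u (nbrs p) -> w p u = w u p) ->
  energy d n w (upd f p v)
  = energy d n w f
    + sumR (map (fun u => w p u * ((v - f u) ^ 2 - (f p - f u) ^ 2)) (nbrs p)).
Proof.
  intros Hp Hw. unfold energy.
  rewrite (sumR_bonds_upd w f p v Hw);
    eauto using box_list_NoDup, in_box_list, in_box_S, in_box_nbrs. lra.
Qed.

Lemma pi_ge0 (w : point -> point -> R) (p : point) :
  (forall u, In u (nbrs p) -> 0 <= w p u) -> 0 <= pi w p.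
Proof. apply sumR_ge0. Qed.

Lemma energy_drop_zero_le (w : point -> point -> R) (f : point -> R) (p : point) (M : R) :
  0 <= f p -> (forall u, In u (nbrs p) -> 0 <= w p u /\ f u <= M) ->
  sumR (map (fun u => w p u * ((0 - f u) ^ 2 - (f p - f u) ^ 2)) (nbrs p))
  <= (2 * f p * M - f p ^ 2) * pi w p.
Proof.
  intros Hfp Hnb. unfold pi. rewrite <- sumR_scale. apply sumR_le.
  intros u Hu. destruct (Hnb u Hu) as [Hw HM].
  assert (0 <= w p u * (f p * (M - f u))) by (apply Rmult_le_pos; nra). nra.
Qed.

Lemma energy_raise_le (w : point -> point -> R) (f : point -> R) (p : point) (c : R) :
  f p <= c -> (forall u, In u (nbrs p) -> 0 <= w p u /\ 0 <= f u) ->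
  sumR (map (fun u => w p u * ((c - f u) ^ 2 - (f p - f u) ^ 2)) (nbrs p))
  <= (c ^ 2 - f p ^ 2) * pi w p.
Proof.
  intros Hc Hnb. unfold pi. rewrite <- sumR_scale. apply sumR_le.
  intros u Hu. destruct (Hnb u Hu) as [Hw Hf].
  assert (0 <= w p u * ((c - f p) * f u)) by (apply Rmult_le_pos; nra). nra.
Qed.

Lemma le_div_one_sub_ratio (a M p q : R) :
  0 <= a -> 0 <= M -> 0 <= q < p -> 0 <= (2 * a * M - a ^ 2) * p + a ^ 2 * q ->
  a <= 2 * M / (1 - q / p).
Proof.
  intros Ha HM Hqp H.
  assert (Hk : a * (p - q) <= 2 * M * p).
  { destruct (Req_dec a 0) as [->|Hne]; [nra|].
    apply (Rmult_le_reg_l a); nra. }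
  replace (2 * M / (1 - q / p)) with (2 * M * p / (p - q)) by (field; lra).
  apply Rmult_le_reg_r with (p - q); [lra|].
  unfold Rdiv. rewrite Rmult_assoc, Rinv_l, Rmult_1_r; lra.
Qed.

Definition transfer (f : point -> R) (y z : point) : point -> R :=
  upd (upd f y 0) z (sqrt (f y ^ 2 + f z ^ 2)).

Lemma sqrt_sum_sq_pow2 (a b : R) : sqrt (a ^ 2 + b ^ 2) ^ 2 = a ^ 2 + b ^ 2.
Proof. rewrite <- Rsqr_pow2, Rsqr_sqrt; [ring|nra]. Qed.

Lemma sqrt_sum_sq_ge (a b : R) : b <= sqrt (a ^ 2 + b ^ 2).
Proof. pose proof (sqrt_pos (a ^ 2 + b ^ 2)). pose proof (sqrt_sum_sq_pow2 a b). nra. Qed.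

Lemma supported_transfer (d n : nat) (f : point -> R) (y z : point) :
  supported d n f -> in_box d n y -> in_box d n z -> supported d n (transfer f y z).
Proof. intros. now apply supported_upd; [apply supported_upd|]. Qed.

Lemma sqnorm_transfer (d n : nat) (f : point -> R) (y z : point) :
  in_box d n y -> in_box d n z -> y <> z -> sqnorm d n (transfer f y z) = sqnorm d n f.
Proof.
  intros Hy Hz Hyz. unfold transfer.
  rewrite !sqnorm_upd, upd_neq, sqrt_sum_sq_pow2 by auto. lra.
Qed.

Lemma energy_transfer_le (d n : nat) (w : point -> point -> R) (f : point -> R)
    (y z : point) (M : R) :
  in_box d n y -> in_box d n z -> y <> z -> ~ adj y z -> 0 <= f y ->
  (forall u, In u (nbrs y) -> w y u = w u y /\ 0 <= w y u /\ f u <= M) ->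
  (forall u, In u (nbrs z) -> w z u = w u z /\ 0 <= w z u /\ 0 <= f u) ->
  energy d n w (transfer f y z)
  <= energy d n w f + (2 * f y * M - f y ^ 2) * pi w y + f y ^ 2 * pi w z.
Proof.
  intros Hy Hz Hyz Hnadj Hfy Hnb_y Hnb_z. unfold transfer.
  set (c := sqrt (f y ^ 2 + f z ^ 2)). set (g := upd f y 0).
  assert (Hgz : g z = f z) by now apply upd_neq.
  assert (Hgnz : forall u, In u (nbrs z) -> g u = f u)
    by (intros u Hu; apply upd_neq; intros ->; now apply Hnadj, nbrs_sym).
  pose proof (energy_upd d n w f y 0 Hy (fun u Hu => proj1 (Hnb_y u Hu))) as Ey.
  pose proof (energy_upd d n w g z c Hz (fun u Hu => proj1 (Hnb_z u Hu))) as Ez.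
  fold g in Ey. rewrite Hgz in Ez.
  assert (Hnb_g : forall u, In u (nbrs z) -> 0 <= w z u /\ 0 <= g u)
    by (intros u Hu; rewrite Hgnz by auto; apply Hnb_z, Hu).
  pose proof (energy_drop_zero_le w f y M Hfy (fun u Hu => proj2 (Hnb_y u Hu))).
  pose proof (energy_raise_le w g z c) as Hraise. rewrite Hgz in Hraise.
  specialize (Hraise (sqrt_sum_sq_ge _ _) Hnb_g).
  rewrite (sqrt_sum_sq_pow2 (f y) (f z) : c ^ 2 = _) in Hraise.
  replace (f y ^ 2 + f z ^ 2 - f z ^ 2) with (f y ^ 2) in Hraise by ring. lra.
Qed.

Theorem lemma5p5 (d : nat) (hd : (2 <= d)%nat) (w : point -> point -> R)
  (wpos : forall x y, length x = d -> adj x y -> 0 < w x y)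
  (wsym : forall x y, length x = d -> adj x y -> w x y = w y x)
  (n : nat) (psi : point -> R) (hpsi : principal_eigvec d n w psi)
  (y z : point) (hy : in_box d n y) (hz : in_box d n z)
  (hpi : pi w z < pi w y) (hyz : ~ adj y z) :
  psi y <= (2 * listmax (map psi (nbrs y))) / (1 - pi w z / pi w y).
Proof.
  destruct hpsi as [Hsupp [Hnn [Hnorm Hmin]]].
  pose proof hy as [Hly _]. pose proof hz as [Hlz _].
  assert (Hyz : y <> z) by (intros ->; lra).
  assert (Hnb : forall p u, length p = d -> In u (nbrs p) ->
            w p u = w u p /\ 0 <= w p u /\ 0 <= psi u).
  { intros p u Hp Hu. repeat split; [now apply wsym|left; now apply wpos|].
    apply Hnn. now rewrite (nbrs_length _ _ Hu). }
  set (M := listmax (map psi (nbrs y))).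
  assert (HM : 0 <= M).
  { destruct (nbrs_nonempty y) as [u Hu]; [intros ->; simpl in Hly; lia|].
    apply Rle_trans with (psi u); [apply (Hnb y u Hly Hu)|apply listmax_ge, in_map, Hu]. }
  apply le_div_one_sub_ratio; auto.
  - split; [apply pi_ge0; intros u Hu; apply (Hnb z u Hlz Hu)|exact hpi].
  - pose proof (Hmin _ (supported_transfer d n psi y z Hsupp hy hz)).
    rewrite sqnorm_transfer in *; auto.
    enough (energy d n w (transfer psi y z)
            <= energy d n w psi + (2 * psi y * M - psi y ^ 2) * pi w y + psi y ^ 2 * pi w z)
      by lra.
    apply energy_transfer_le; auto.
    intros u Hu. destruct (Hnb y u Hly Hu) as (? & ? & _).
    repeat split; auto. apply listmax_ge, in_map, Hu.
Qed.
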